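(* Let $\mathcal{G}=(\mathcal{V},\mathcal{E})$ be connected, $c\in\mathbb{R}^n$, $\bar c=\frac1n\sum_ic_i$, and $\epsilon>0$. Set $x^0=c$ and for $t\ge0$ choose $e=(i,j)\in\mathcal{E}$ uniformly at random (independently across iterations) and set $x^{t+1}=x^t$ except: if $x_i^t\le x_j^t-\epsilon$ then $x_i^{t+1}=x_i^t+\epsilon/2$, $x_j^{t+1}=x_j^t-\epsilon/2$; if $x_j^t\le x_i^t-\epsilon$ then $x_i^{t+1}=x_i^t-\epsilon/2$, $x_j^{t+1}=x_j^t+\epsilon/2$. Let $\Delta^t(\epsilon)=\frac1m\big|\{(i,j)\in\mathcal{E}:|x_i^t-x_j^t|\ge\epsilon\}\big|$ and $\delta^k(\epsilon)=\frac1k\sum_{t=0}^{k-1}\mathbb{E}[\Delta^t(\epsilon)]$. Then for all $k\ge1$ $$\delta^k(\epsilon)\le\frac{2\|c-\bar c\mathbf{1}\|^2}{k\epsilon^2}.$$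
   Context: $\mathcal{G}$ is an undirected graph with vertices $\mathcal{V}=\{1,\dots,n\}$ and $m=|\mathcal{E}|$ edges, each edge $e=(i,j)$ having an arbitrary but fixed orientation. $\mathbf{1}$ is the all-ones vector and $\|\cdot\|$ the Euclidean norm. (The bound $2\|c-\bar c\mathbf 1\|^2$ equals $4(D(y^* )-D(y^0))$ for the dual function $D(y)=-(\mathbf{A}c)^\top y-\tfrac12\|\mathbf{A}^\top y\|^2$ with $y^0=0$, $\mathbf{A}$ the edge–vertex incidence matrix.) *)

From HB Require Import structures.
From mathcomp Require Import all_boot all_order all_algebra.
Set Implicit Arguments. Unset Strict Implicit. Unset Printing Implicit Defensive.
Import Order.TTheory GRing.Theory Num.Theory.
Local Open Scope ring_scope.

Section Gossip.
Variables (R : realFieldType) (n m : nat).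

(* A graph on vertices 'I_n with m edges; edge k has fixed orientation E k = (i,j). *)
Definition simple_graph (E : 'I_m -> 'I_n * 'I_n) : Prop :=
  injective E /\ (forall k, (E k).1 != (E k).2) /\
  (forall k l, E k != ((E l).2, (E l).1)).

Definition adj (E : 'I_m -> 'I_n * 'I_n) : rel 'I_n :=
  fun i j => [exists k, (E k == (i, j)) || (E k == (j, i))].

Definition connected_graph (E : 'I_m -> 'I_n * 'I_n) : Prop :=
  forall i j : 'I_n, connect (adj E) i j.

Definition step (eps : R) (e : 'I_n * 'I_n) (x : 'I_n -> R) : 'I_n -> R :=
  fun v =>
    let i := e.1 in let j := e.2 in
    if x i <= x j - eps then
      (if v == i then x v + eps / 2 else if v == j then x v - eps / 2 else x v)
    else if x j <= x i - eps then
      (if v == i then x v - eps / 2 else if v == j then x v + eps / 2 else x v)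
    else x v.

Definition traj (eps : R) (E : 'I_m -> 'I_n * 'I_n) (c : 'I_n -> R)
  (s : seq 'I_m) : 'I_n -> R :=
  foldl (fun x k => step eps (E k) x) c s.

Definition Delta (eps : R) (E : 'I_m -> 'I_n * 'I_n) (x : 'I_n -> R) : R :=
  (#|[pred k : 'I_m | eps <= `|x (E k).1 - x (E k).2|]|)%:R / m%:R.

(* E[Delta^t]: edges chosen i.i.d. uniformly, so the expectation is the
   average over all m^t sequences of edge choices of length t. *)
Definition expDelta (eps : R) (E : 'I_m -> 'I_n * 'I_n) (c : 'I_n -> R)
  (t : nat) : R :=
  (\sum_(w : {ffun 'I_t -> 'I_m}) Delta eps E (traj eps E c [seq w i | i <- enum 'I_t]))
    / (m ^ t)%:R.

Definition delta (eps : R) (E : 'I_m -> 'I_n * 'I_n) (c : 'I_n -> R) (k : nat) : R :=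
  (\sum_(t < k) expDelta eps E c t) / k%:R.

Definition mean (c : 'I_n -> R) : R := (\sum_i c i) / n%:R.

Definition sqdist_mean (c : 'I_n -> R) : R := \sum_i (c i - mean c) ^+ 2.

End Gossip.

(* The squared deviation V(x) = sum_i (x_i - mu)^2 from any fixed level mu is a
   Lyapunov function: an update along an edge with |x_i - x_j| >= eps moves eps/2
   from the larger to the smaller endpoint and lowers V by at least eps^2/2, while
   other updates leave x unchanged.  Averaging over the uniformly chosen edge,
   E[V(x^{t+1})] <= E[V(x^t)] - eps^2/2 E[Delta^t], and telescoping gives
   eps^2/2 sum_{t<k} E[Delta^t] <= V(c). *)

From HB Require Import structures.
From mathcomp Require Import all_boot all_order all_algebra.
From mathcomp Require Import lra.
Set Implicit Arguments. Unset Strict Implicit. Unset Printing Implicit Defensive.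
Import Order.TTheory GRing.Theory Num.Theory.
Local Open Scope ring_scope.

Lemma big_ffun_ordS (V : nmodType) (T : finType) (t : nat) (F : seq T -> V) :
  \sum_(w : {ffun 'I_t.+1 -> T}) F [seq w i | i <- enum 'I_t.+1] =
  \sum_(a : T) \sum_(w : {ffun 'I_t -> T}) F (a :: [seq w i | i <- enum 'I_t]).
Proof.
rewrite pair_big /=.
pose cons_ffun (p : T * {ffun 'I_t -> T}) : {ffun 'I_t.+1 -> T} :=
  [ffun i => if unlift ord0 i is Some i' then p.2 i' else p.1].
pose uncons_ffun (w : {ffun 'I_t.+1 -> T}) : T * {ffun 'I_t -> T} :=
  (w ord0, [ffun i => w (lift ord0 i)]).
rewrite (reindex cons_ffun); last first.
  exists uncons_ffun => [[a f] _ | w _].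
    rewrite /uncons_ffun /cons_ffun ffunE unlift_none; congr (_, _).
    by apply/ffunP => i; rewrite !ffunE liftK.
  apply/ffunP => i; rewrite /cons_ffun /uncons_ffun !ffunE.
  by case: unliftP => [j ->|->]; rewrite ?ffunE.
apply: eq_bigr => -[a f] _ /=.
rewrite enum_ordSl /= -map_comp ffunE unlift_none; congr (F (_ :: _)).
by apply: eq_map => i /=; rewrite ffunE liftK.
Qed.

Section SquaredDeviation.
Variables (R : realFieldType) (n : nat).
Implicit Types (mu eps : R) (x y : 'I_n -> R).

Definition sqdev mu x : R := \sum_i (x i - mu) ^+ 2.

Lemma sqdev_ge0 mu x : 0 <= sqdev mu x.
Proof. by apply: sumr_ge0 => i _; apply: sqr_ge0. Qed.

Lemma sqdev_transfer mu x y (i j : 'I_n) d :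
  i != j -> y i = x i + d -> y j = x j - d ->
  (forall v, v != i -> v != j -> y v = x v) ->
  sqdev mu y = sqdev mu x + 2 * d * (x i - x j + d).
Proof.
move=> neq_ij yi yj y_off.
have diff : \sum_v ((y v - mu) ^+ 2 - (x v - mu) ^+ 2) = 2 * d * (x i - x j + d).
  rewrite (bigD1 i) //= (bigD1 j) 1?eq_sym //= big1 ?addr0 => [|v /andP[vi vj]].
    by rewrite yi yj; lra.
  by rewrite y_off // subrr.
by rewrite /sqdev -diff sumrB addrC subrK.
Qed.

Lemma sqdev_step mu eps (e : 'I_n * 'I_n) x : 0 < eps ->
  sqdev mu (step eps e x) <= sqdev mu x - eps ^+ 2 / 2 * (eps <= `|x e.1 - x e.2|)%R%:R.
Proof.
case: e => i j eps_gt0; rewrite /step /=.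
have [up|not_up] := boolP (x i <= x j - eps).
  have neq_ij : i != j by apply: contraTneq up => ->; lra.
  rewrite (@sqdev_transfer _ x _ i j (eps / 2)) //; last 3 first.
  - by rewrite eqxx.
  - by rewrite eq_sym (negbTE neq_ij) eqxx.
  - by move=> v /negbTE-> /negbTE->.
  have -> : eps <= `|x i - x j| by rewrite distrC ger0_norm; lra.
  rewrite mulr1; nra.
have [down|not_down] := boolP (x j <= x i - eps).
  have neq_ij : i != j by apply: contraTneq down => ->; lra.
  rewrite (@sqdev_transfer _ x _ i j (- (eps / 2))) //; last 3 first.
  - by rewrite eqxx.
  - by rewrite eq_sym (negbTE neq_ij) eqxx opprK.
  - by move=> v /negbTE-> /negbTE->.
  have -> : eps <= `|x i - x j| by rewrite ger0_norm; lra.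
  rewrite mulr1; nra.
have -> : (eps <= `|x i - x j|) = false.
  rewrite -ltNge in not_up not_down.
  by apply/negbTE; rewrite -ltNge ltr_norml; apply/andP; split; lra.
by rewrite mulr0 subr0.
Qed.

End SquaredDeviation.

Section Gossip.
Variables (R : realFieldType) (n m : nat) (E : 'I_m -> 'I_n * 'I_n) (eps : R).
Hypotheses (m_gt0 : (0 < m)%N) (eps_gt0 : 0 < eps).

Lemma Delta_sum x :
  Delta eps E x = (\sum_k (eps <= `|x (E k).1 - x (E k).2|)%R%:R) / m%:R.
Proof. by rewrite /Delta -sum1_card big_mkcond natr_sum. Qed.

Lemma avg_sqdev_step mu x :
  (\sum_k sqdev mu (step eps (E k) x)) / m%:R <= sqdev mu x - eps ^+ 2 / 2 * Delta eps E x.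
Proof.
have m_pos : 0 < m%:R :> R by rewrite ltr0n.
rewrite ler_pdivrMr // Delta_sum mulrBl mulrA divfK ?gt_eqF // mulr_sumr.
have -> : sqdev mu x * m%:R = \sum_(k < m) sqdev mu x by rewrite sumr_const card_ord mulr_natr.
rewrite -sumrB.
by apply: ler_sum => k _; apply: sqdev_step.
Qed.

Lemma expDelta0 c : expDelta eps E c 0 = Delta eps E c.
Proof.
rewrite /expDelta expn0 divr1 (eq_bigr (fun=> Delta eps E c)) => [|w _].
  by rewrite sumr_const card_ffun !card_ord.
by rewrite enum_ord0.
Qed.

Lemma expDeltaS c t :
  expDelta eps E c t.+1 = (\sum_k expDelta eps E (step eps (E k) c) t) / m%:R.
Proof.
by rewrite /expDelta (@big_ffun_ordS _ _ t (fun s => Delta eps E (traj eps E c s)))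
  -mulr_suml expnSr natrM invfM mulrA.
Qed.

Lemma sum_expDelta_le_sqdev mu k c :
  eps ^+ 2 / 2 * \sum_(t < k) expDelta eps E c t <= sqdev mu c.
Proof.
elim: k c => [|k IH] c; first by rewrite big_ord0 mulr0 sqdev_ge0.
have m_pos : 0 < m%:R :> R by rewrite ltr0n.
rewrite big_ord_recl expDelta0.
under eq_bigr => t _ do rewrite lift0 expDeltaS.
rewrite -mulr_suml exchange_big /= mulrDr.
have IH_avg : eps ^+ 2 / 2 * ((\sum_j \sum_(t < k) expDelta eps E (step eps (E j) c) t) / m%:R)
              <= (\sum_j sqdev mu (step eps (E j) c)) / m%:R.
  rewrite mulrA mulr_sumr ler_pM2r ?invr_gt0 //.
  by apply: ler_sum => j _; apply: IH.
have := avg_sqdev_step mu c; lra.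
Qed.

End Gossip.

Theorem mainTheorem20 (R : realFieldType) (n m : nat)
  (E : 'I_m -> 'I_n * 'I_n) (c : 'I_n -> R) (eps : R) (k : nat) :
  simple_graph E -> connected_graph E -> (0 < m)%N ->
  0 < eps -> (1 <= k)%N ->
  delta eps E c k <= 2 * sqdist_mean c / (k%:R * eps ^+ 2).
Proof.
move=> _ _ m_gt0 eps_gt0 k_ge1.
have k_gt0 : 0 < k%:R :> R by rewrite ltr0n.
have eps2_gt0 : 0 < eps ^+ 2 by apply: exprn_gt0.
have bound := sum_expDelta_le_sqdev E m_gt0 eps_gt0 (mean c) k c.
rewrite /delta invfM mulrA [X in _ <= X]mulrAC ler_pM2r ?invr_gt0 // ler_pdivlMr //.
by move: bound; rewrite /sqdist_mean -/(sqdev _ _); nra.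
Qed.
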